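(* Let $F_t$, $t\in[0,1]$, be a one-parameter family on a complete metric space $(\mathbb X,d)$ satisfying (H1) and (H2), and suppose $f_{(i_*,1)}$ is an isometry for some $i_*\in\{1,\dots,N\}$. (a) If an upper transition attractor $A^\bullet$ exists, then $f_{(i_*,1)}(A^\bullet)=A^\bullet$. (b) If moreover (H3) holds and the lower transition attractor $A_\bullet$ exists and is compact, then $f_{(i_*,1)}(A_\bullet)=A_\bullet$.
   Context: Let $(\mathbb X,d)$ be a complete metric space. A one-parameter family is $F_t=\{f_{(1,t)},\dots,f_{(N,t)}\}$, $t\in[0,1]$, $N\ge2$, of continuous self-maps of $\mathbb X$. $\mathrm{Lip}(f,d)=\sup_{x\ne y}d(f(x),f(y))/d(x,y)$ and $\mathrm{Lip}(F_t,d)=\max_i\mathrm{Lip}(f_{(i,t)},d)$. Conditions: (H1) for every $x\in\mathbb X$ and every $i$, the map $t\mapsto f_{(i,t)}(x)$ is continuous on $[0,1]$; (H2) $\mathrm{Lip}(F_t,d)<1$ for all $t\in[0,1)$; (H3) for each $i$ the limit $q_i=\lim_{t\to1^-}q_{i,t}$ exists, where $q_{i,t}$ is the unique fixed point of $f_{(i,t)}$ for $t\in[0,1)$; $Q=\{q_1,\dots,q_N\}$. For an IFS $F$ and $S\subseteq\mathbb X$, $F(S)=\overline{\bigcup_{f\in F}f(S)}$. For $t\in[0,1)$, $A_t$ is the attractor of $F_t$, the unique nonempty compact set with $F_t(A_t)=A_t$. With $h$ the Hausdorff metric, an upper transition attractor is a compact set $A^\bullet$ for which there is an increasing sequence $t_n\in[0,1)$,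 $t_n\to1$, with $h(A_{t_n},A^\bullet)\to0$. The lower transition attractor is the smallest (w.r.t. inclusion) set $A_\bullet$ with $F_1(A_\bullet)=A_\bullet$ and $Q\subseteq A_\bullet$. *)

From Stdlib Require Import Reals Lra List.
Open Scope R_scope.

Section Metric.
Context {X : Type} (d : X -> X -> R).

Definition is_metric : Prop :=
  (forall x y, 0 <= d x y) /\
  (forall x y, d x y = 0 <-> x = y) /\
  (forall x y, d x y = d y x) /\
  (forall x y z, d x z <= d x y + d y z).

Definition seq_converges (u : nat -> X) (l : X) : Prop :=
  forall eps, 0 < eps -> exists n0, forall n, (n0 <= n)%nat -> d (u n) l < eps.

Definition cauchy (u : nat -> X) : Prop :=
  forall eps, 0 < eps -> exists n0, forall n m,
    (n0 <= n)%nat -> (n0 <= m)%nat -> d (u n) (u m) < eps.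

Definition complete_metric : Prop :=
  forall u, cauchy u -> exists l, seq_converges u l.

Definition mcontinuous (f : X -> X) : Prop :=
  forall x eps, 0 < eps -> exists delta, 0 < delta /\
    forall y, d x y < delta -> d (f x) (f y) < eps.

Definition open_set (U : X -> Prop) : Prop :=
  forall x, U x -> exists r, 0 < r /\ forall y, d x y < r -> U y.

Definition compact_set (K : X -> Prop) : Prop :=
  forall (I : Type) (U : I -> X -> Prop),
    (forall i, open_set (U i)) ->
    (forall x, K x -> exists i, U i x) ->
    exists l : list I, forall x, K x -> exists i, In i l /\ U i x.

Definition closure (S : X -> Prop) : X -> Prop :=
  fun x => forall eps, 0 < eps -> exists y, S y /\ d x y < eps.

Definition set_eq (A B : X -> Prop) : Prop := forall x, A x <-> B x.
Definition subset (A B : X -> Prop) : Prop := forall x, A x -> B x.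

Definition image (f : X -> X) (S : X -> Prop) : X -> Prop :=
  fun y => exists x, S x /\ y = f x.

Definition hutch (N : nat) (g : nat -> X -> X) (S : X -> Prop) : X -> Prop :=
  closure (fun y => exists i, (i < N)%nat /\ image (g i) S y).

Definition lip_lt1 (g : X -> X) : Prop :=
  exists c, 0 <= c < 1 /\ forall x y, d (g x) (g y) <= c * d x y.

Definition isometry (g : X -> X) : Prop :=
  forall x y, d (g x) (g y) = d x y.

Definition is_attractor (N : nat) (g : nat -> X -> X) (A : X -> Prop) : Prop :=
  (exists x, A x) /\ compact_set A /\ set_eq (hutch N g A) A.

(** h(A_n, B) -> 0 for the Hausdorff metric h induced by d
    (between nonempty compact sets): for every eps > 0, eventually every
    point of A_n is eps-close to B and every point of B is eps-close to A_n *)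
Definition hausdorff_cvg (An : nat -> X -> Prop) (B : X -> Prop) : Prop :=
  forall eps, 0 < eps -> exists n0, forall n, (n0 <= n)%nat ->
    (forall x, An n x -> exists y, B y /\ d x y < eps) /\
    (forall y, B y -> exists x, An n x /\ d x y < eps).

End Metric.

(** The family: f i t is f_(i,t); A t is the attractor A_t. *)

Definition upper_transition_attractor {X : Type} (d : X -> X -> R)
    (A : R -> X -> Prop) (Aup : X -> Prop) : Prop :=
  compact_set d Aup /\
  exists tn : nat -> R,
    (forall n, 0 <= tn n < 1) /\
    (forall n, tn n < tn (S n)) /\
    Un_cv tn 1 /\
    hausdorff_cvg d (fun n => A (tn n)) Aup.

Definition lower_transition_attractor {X : Type} (d : X -> X -> R) (N : nat)
    (f : nat -> R -> X -> X) (Q : nat -> X) (Alow : X -> Prop) : Prop :=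
  set_eq (hutch d N (fun i => f i 1) Alow) Alow /\
  (forall i, (i < N)%nat -> Alow (Q i)) /\
  (forall B : X -> Prop,
     set_eq (hutch d N (fun i => f i 1) B) B ->
     (forall i, (i < N)%nat -> B (Q i)) ->
     subset Alow B).

(* (a) For t < 1 every attractor A_t is invariant under f_(i*,t). Passing to the limit along
   t_n -> 1, with f_(i*,t_n) -> f_(i*,1) pointwise and all maps nonexpansive, the closed set A^•
   is invariant under f_(i*,1). (b) A_• is a fixed point of the Hutchinson operator of F_1, hence
   invariant under f_(i*,1). In both cases the conclusion follows from the classical fact that an
   isometry g mapping a compact set K into itself maps it onto K: a point y of K outside g(K) has
   an orbit whose points are pairwise at distance at least dist(y, g(K)) > 0, which is impossible
   in a totally bounded set. *)
From Stdlib Require Import Reals Lra Lia List Classical.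
Open Scope R_scope.

Section CompactMetric.
Context {X : Type} (d : X -> X -> R).
Hypothesis Hd : is_metric d.

Lemma dist_ge0 x y : 0 <= d x y.
Proof. apply Hd. Qed.

Lemma dist_refl x : d x x = 0.
Proof. apply Hd; reflexivity. Qed.

Lemma dist_eq0 x y : d x y = 0 -> x = y.
Proof. apply Hd. Qed.

Lemma dist_sym x y : d x y = d y x.
Proof. apply Hd. Qed.

Lemma dist_triangle x y z : d x z <= d x y + d y z.
Proof. apply Hd. Qed.

Lemma closure_self (S : X -> Prop) x : S x -> closure d S x.
Proof. intros Sx eps Heps; exists x; rewrite dist_refl; auto. Qed.

Lemma hutch_fixed_invariant N (g : nat -> X -> X) (S : X -> Prop) i x :
  set_eq (hutch d N g S) S -> (i < N)%nat -> S x -> S (g i x).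
Proof.
  intros Hfix Hi Sx; apply Hfix, closure_self.
  exists i; split; [exact Hi | exists x; auto].
Qed.

Lemma compact_nonexpansive_image_away (K : X -> Prop) (g : X -> X) y :
  compact_set d K -> (forall z w, d (g z) (g w) <= d z w) ->
  (forall z, K z -> g z <> y) ->
  exists e, 0 < e /\ forall z, K z -> e <= d (g z) y.
Proof.
  intros HK Hg Hne.
  destruct (HK nat (fun k z => / INR (S k) < d (g z) y)) as [l Hl].
  - intros k z Hkz; exists (d (g z) y - / INR (S k)); split; [lra|].
    intros w Hw; pose proof (dist_triangle (g z) (g w) y); pose proof (Hg z w); lra.
  - intros z Kz.
    assert (Hpos : 0 < d (g z) y).
    { destruct (dist_ge0 (g z) y) as [H|H]; [exact H|].
      exfalso; apply (Hne z Kz), dist_eq0; auto. }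
    destruct (archimed_cor1 _ Hpos) as [M [HM HM0]].
    exists (pred M); replace (S (pred M)) with M by lia; exact HM.
  - exists (/ INR (S (list_max l))); split.
    + apply Rinv_0_lt_compat, lt_0_INR; lia.
    + intros z Kz; destruct (Hl z Kz) as [k [Hk Hkz]].
      assert (Hkmax : (k <= list_max l)%nat).
      { apply (proj1 (Forall_forall _ _) (proj1 (list_max_le l _) (le_n _))); exact Hk. }
      assert (/ INR (S (list_max l)) <= / INR (S k)).
      { apply Rinv_le_contravar; [apply lt_0_INR; lia | apply le_INR; lia]. }
      lra.
Qed.

Lemma compact_closed (K : X -> Prop) y : compact_set d K -> closure d K y -> K y.
Proof.
  intros HK Hc; apply NNPP; intro Hy.
  destruct (compact_nonexpansive_image_away K (fun z => z) y HK) as [e [He Hfar]].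
  - intros; lra.
  - intros z Kz ->; auto.
  - destruct (Hc e He) as [z [Kz Hz]]; specialize (Hfar z Kz).
    rewrite dist_sym in Hz; lra.
Qed.

Lemma compact_finite_net (K : X -> Prop) r : compact_set d K -> 0 < r ->
  exists l, forall x, K x -> exists z, In z l /\ d z x < r.
Proof.
  intros HK Hr; destruct (HK X (fun z w => d z w < r)) as [l Hl].
  - intros z w Hw; exists (r - d z w); split; [lra|].
    intros v Hv; pose proof (dist_triangle z w v); lra.
  - intros x Kx; exists x; rewrite dist_refl; exact Hr.
  - exists l; exact Hl.
Qed.

(* Two distinct terms cannot share a centre of the net, so removing one centre drops one term. *)
Lemma separated_seq_not_netted e (l : list X) : forall u : nat -> X,
  (forall n m, n <> m -> e <= d (u n) (u m)) ->
  (forall n, exists z, In z l /\ d z (u n) < e / 2) -> False.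
Proof.
  induction l as [|z l IH]; intros u Hsep Hnet.
  - destruct (Hnet O) as [z [[] _]].
  - destruct (classic (exists n, d z (u n) < e / 2)) as [[n Hn]|Hnone].
    + set (skip := fun k => if Nat.ltb k n then k else S k).
      assert (Hskip : forall k, skip k <> n).
      { intro k; unfold skip; destruct (Nat.ltb_spec k n); lia. }
      assert (Hskip_inj : forall k m, k <> m -> skip k <> skip m).
      { intros k m; unfold skip; destruct (Nat.ltb_spec k n), (Nat.ltb_spec m n); lia. }
      apply (IH (fun k => u (skip k))); [intros k m Hkm; apply Hsep; auto |].
      intro k; destruct (Hnet (skip k)) as [w [[<-|Hw] Hwk]]; [exfalso | eauto].
      pose proof (Hsep _ _ (Hskip k)); pose proof (dist_triangle (u (skip k)) z (u n)).
      rewrite (dist_sym (u (skip k)) z) in *; lra.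
    + apply (IH u Hsep); intro n; destruct (Hnet n) as [w [[<-|Hw] Hwn]]; eauto.
      exfalso; eauto.
Qed.

Section IsometryOrbit.
Variables (K : X -> Prop) (g : X -> X).
Hypotheses (Hiso : isometry d g) (Hinv : forall z, K z -> K (g z)).

Lemma isometry_iter_dist n a b : d (Nat.iter n g a) (Nat.iter n g b) = d a b.
Proof. induction n; simpl; [reflexivity | rewrite Hiso; exact IHn]. Qed.

Lemma isometry_orbit_separated e y : K y ->
  (forall z, K z -> e <= d (g z) y) ->
  forall n m, n <> m -> e <= d (Nat.iter n g y) (Nat.iter m g y).
Proof.
  intros Ky Hfar.
  assert (Hfwd : forall n k, e <= d (Nat.iter n g y) (Nat.iter (n + S k) g y)).
  { intros n k; rewrite Nat.iter_add, isometry_iter_dist, dist_sym; simpl.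
    apply Hfar, Nat.iter_invariant; auto. }
  intros n m Hnm; destruct (Nat.lt_total n m) as [H|[H|H]]; [| lia |].
  - replace m with (n + S (m - n - 1))%nat by lia; apply Hfwd.
  - rewrite dist_sym; replace n with (m + S (n - m - 1))%nat by lia; apply Hfwd.
Qed.

Lemma isometry_compact_invariant_image : compact_set d K -> set_eq (image g K) K.
Proof.
  intros HK y; split; [intros [z [Kz ->]]; auto |].
  intro Ky; apply NNPP; intro Hout.
  destruct (compact_nonexpansive_image_away K g y HK) as [e [He Hfar]].
  - intros; rewrite Hiso; lra.
  - intros z Kz Hz; apply Hout; exists z; auto.
  - destruct (compact_finite_net K (e / 2) HK ltac:(lra)) as [l Hl].
    apply (separated_seq_not_netted e l (fun n => Nat.iter n g y)).
    + apply isometry_orbit_separated; auto.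
    + intro n; apply Hl, Nat.iter_invariant; auto.
Qed.

End IsometryOrbit.

(* The compact limit K of invariant sets An n is invariant under the pointwise limit of
   nonexpansive maps gn n: for x in K pick x' in An n close to x and y in An n close to
   gn n x' (and hence to g x). *)
Lemma hausdorff_limit_invariant (An : nat -> X -> Prop) (K : X -> Prop)
    (gn : nat -> X -> X) (g : X -> X) :
  compact_set d K -> hausdorff_cvg d An K ->
  (forall n x y, d (gn n x) (gn n y) <= d x y) ->
  (forall n x, An n x -> An n (gn n x)) ->
  (forall x, seq_converges d (fun n => gn n x) (g x)) ->
  forall x, K x -> K (g x).
Proof.
  intros HK Hcvg Hne Hinv Hpt x Kx; apply compact_closed; [exact HK|].
  intros eps Heps.
  destruct (Hpt x (eps / 3) ltac:(lra)) as [n0 Hn0].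
  destruct (Hcvg (eps / 3) ltac:(lra)) as [n1 Hn1].
  destruct (Hn1 (Nat.max n0 n1) ltac:(lia)) as [Hin Hout].
  set (n := Nat.max n0 n1) in *.
  destruct (Hout x Kx) as [x' [Ax' Hxx']].
  destruct (Hin (gn n x') (Hinv n x' Ax')) as [y [Ky Hy]].
  exists y; split; [exact Ky|].
  assert (Hgx : d (gn n x) (g x) < eps / 3) by (apply Hn0; lia).
  pose proof (Hne n x x').
  pose proof (dist_triangle (g x) (gn n x) y).
  pose proof (dist_triangle (gn n x) (gn n x') y).
  rewrite dist_sym in Hgx, Hxx'; lra.
Qed.

End CompactMetric.

Lemma lip_lt1_nonexpansive {X : Type} (d : X -> X -> R) (g : X -> X) :
  is_metric d -> lip_lt1 d g -> forall x y, d (g x) (g y) <= d x y.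
Proof.
  intros Hd [c [Hc Hl]] x y; pose proof (Hl x y); pose proof (dist_ge0 d Hd x y); nra.
Qed.

Theorem mainTheorem9
  (X : Type) (d : X -> X -> R) (N : nat) (f : nat -> R -> X -> X)
  (A : R -> X -> Prop) (istar : nat)
  (Hd : is_metric d) (Hcomp : complete_metric d) (HN : (2 <= N)%nat)
  (Hcont : forall i t, (i < N)%nat -> 0 <= t <= 1 -> mcontinuous d (f i t))
  (* (H1) *)
  (H1 : forall i x, (i < N)%nat -> forall t, 0 <= t <= 1 ->
          forall eps, 0 < eps -> exists delta, 0 < delta /\
            forall s, 0 <= s <= 1 -> Rabs (s - t) < delta ->
              d (f i s x) (f i t x) < eps)
  (* (H2) *)
  (H2 : forall t, 0 <= t < 1 -> forall i, (i < N)%nat -> lip_lt1 d (f i t))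
  (* A t is the attractor A_t of F_t for t in [0,1) *)
  (HA : forall t, 0 <= t < 1 -> is_attractor d N (fun i => f i t) (A t))
  (Histar : (istar < N)%nat)
  (Hiso : isometry d (f istar 1)) :
  (* (a) *)
  (forall Aup : X -> Prop, upper_transition_attractor d A Aup ->
     set_eq (image (f istar 1) Aup) Aup) /\
  (* (b) *)
  (forall (q : nat -> R -> X) (Q : nat -> X),
     (forall i t, (i < N)%nat -> 0 <= t < 1 -> f i t (q i t) = q i t) ->
     (* (H3) *)
     (forall i, (i < N)%nat -> forall eps, 0 < eps -> exists delta, 0 < delta /\
        forall t, 1 - delta < t < 1 -> d (q i t) (Q i) < eps) ->
     forall Alow : X -> Prop,
       lower_transition_attractor d N f Q Alow ->
       compact_set d Alow ->
       set_eq (image (f istar 1) Alow) Alow).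
Proof.
  split.
  - intros Aup [HK [tn [Htn [_ [Htn1 Hcvg]]]]].
    apply (isometry_compact_invariant_image d Hd); auto.
    apply (hausdorff_limit_invariant d Hd (fun n => A (tn n)) Aup (fun n => f istar (tn n)));
      auto.
    + intros n; apply lip_lt1_nonexpansive, H2; auto.
    + intros n x; apply (hutch_fixed_invariant d Hd N (fun i => f i (tn n))); auto.
      apply HA, Htn.
    + intros x eps Heps.
      destruct (H1 istar x Histar 1 ltac:(lra) eps Heps) as [del [Hdel Hclose]].
      destruct (Htn1 del Hdel) as [n0 Hn0]; exists n0; intros n Hn.
      apply Hclose; [pose proof (Htn n); lra | apply Hn0; lia].
  - intros q Q _ _ Alow [Hfix _] HK.
    apply (isometry_compact_invariant_image d Hd); auto.
    intros z; apply (hutch_fixed_invariant d Hd N (fun i => f i 1)); auto.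
Qed.
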